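(* Consider a single cell $K_e$ of the mesh, on which the finite element approximation is $u_h|_{K_e}=\sum_{j\in\mathcal N_e}u_j\varphi_j$ with coefficients $u_j\in\mathbb R^m$, and assume no facet of $K_e$ lies on a non-periodic boundary. Let $\mathcal G\subset\mathbb R^m$ be convex and assume $u_j\in\mathcal G$ for all $j\in\mathcal N_e$. Let $s$, $m_0^e$, $u_0^e$ be as defined in the context (so $u_0^e\in\mathcal G$), and for each $i\in\mathcal N_e^\partial$ let $\lambda_{0i}^e>0$ be such that the one-dimensional bar state $$\bar u_{0i}^e=\frac{u_i+u_0^e}{2}-\frac{(\mathbf f(u_i)-\mathbf f(u_0^e))\,\mathbf n_{i,e}}{2\lambda_{0i}^e}$$ belongs to $\mathcal G$. Define the intermediate cell average $$\bar u^e=u^e-\frac{\Delta t_e}{|K_e|}\int_{\partial K_e}\mathbf f_h\,\mathbf n\,\mathrm ds ,\qquad \mathbf f_h=\sum_{j\in\mathcal N_e}\mathbf f(u_j)\varphi_j,$$ with a parameter $\Delta t_e>0$. If $$\Delta t_e\le \Delta t_e^{\max}:=\frac1s\min\left\{\min_{i\in\mathcal N_e^\partial}\frac{m_i^e}{|\mathbf c_{i,e}|\lambda_{0i}^e},\ \frac{m_0^e}{\sum_{i\in\mathcal N_e^\partial}|\mathbf c_{i,e}|\lambda_{0i}^e}\right\},$$ then $\bar u^e\in\mathcal G$.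
   Context: Setting: $\Omega\subset\mathbb R^d$, a conforming mesh of cells $K_e$ (simplices or boxes), and a hyperbolic conservation law $\partial_t u+\nabla\cdot\mathbf f(u)=0$ with unknown $u\in\mathbb R^m$ and flux $\mathbf f:\mathbb R^m\to\mathbb R^{m\times d}$; for a vector $\mathbf n\in\mathbb R^d$, $\mathbf f(u)\mathbf n$ denotes the normal flux. The continuous finite element space of degree $p$ uses the Bernstein basis $\varphi_j$ (globally continuous, nonnegative, partition of unity). $\mathcal N_e$ is the set of global indices $j$ of basis functions supported on $K_e$; $\sum_{j\in\mathcal N_e}\varphi_j\equiv1$ on $K_e$. $\mathcal N_e^\partial=\{i\in\mathcal N_e: \mathbf x_i\in\partial K_e\}$ (nodes on the cell boundary) and $\mathcal N_e^0=\mathcal N_e\setminus\mathcal N_e^\partial$; for $i\in\mathcal N_e^0$, $\varphi_i$ vanishes on $\partial K_e$. $m_i^e=\int_{K_e}\varphi_i\,\mathrm d\mathbf x>0$, $|K_e|$ is the volume of $K_e$, and $u^e=\frac1{|K_e|}\sum_{i\in\mathcal N_e}m_i^eu_i$ is the cell average. $\mathbf n$ is the unit outward normal of $K_e$, $\mathbf c_{i,e}=\int_{\partial K_e}\varphi_i\mathbf n\,\mathrm ds$ (assumed nonzero for $i\in\mathcal N_e^\partial$), and $\mathbf n_{i,e}=\mathbf c_{i,e}/|\mathbf c_{i,e}|$. If $\mathcal N_e^0\neq\emptyset$: $s=1$, $m_0^e=\sum_{i\in\mathcal N_e^0}m_i^e$, $u_0^e=\frac1{m_0^e}\sum_{i\in\mathcal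 N_e^0}m_i^eu_i$. If $\mathcal N_e^0=\emptyset$: $s=2$, $m_0^e=|K_e|$, $u_0^e=u^e$. *)

From HB Require Import structures.
From mathcomp Require Import all_boot all_order all_algebra.
From mathcomp Require Import all_classical all_reals.
From mathcomp Require Import topology normedtype measure lebesgue_integral.
Set Implicit Arguments. Unset Strict Implicit. Unset Printing Implicit Defensive.
Import Order.TTheory GRing.Theory Num.Theory.
Local Open Scope ring_scope.
Local Open Scope classical_set_scope.

Section Defs.
Context (R : realType) (md : measure_display) (T : measurableType md).

Definition vint (k : nat) (mu : {measure set T -> \bar R}) (D : set T)
  (g : T -> 'cV[R]_k) : 'cV[R]_k :=
  \col_i Rintegral mu D (fun x => g x i 0).

Definition vnorm (k : nat) (v : 'cV[R]_k) : R := Num.sqrt (\sum_i v i 0 ^+ 2).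

Definition convex_set (k : nat) (G : set 'cV[R]_k) : Prop :=
  forall x y (t : R), 0 <= t <= 1 -> G x -> G y -> G (t *: x + (1 - t) *: y).

Context (I : finType) (mu sigma : {measure set T -> \bar R}) (K bK : set T).
Context (phi : I -> T -> R) (bnd : {pred I}).

Definition cell_vol : R := fine (mu K).
Definition mass (i : I) : R := Rintegral mu K (phi i).
Definition cvec (dim : nat) (nrm : T -> 'cV[R]_dim) (i : I) : 'cV[R]_dim :=
  vint sigma bK (fun x => phi i x *: nrm x).

Definition has_interior : bool := [exists i, ~~ bnd i].
Definition s_par : R := if has_interior then 1 else 2.
Definition m0 : R :=
  if has_interior then \sum_(i | ~~ bnd i) mass i else cell_vol.
Definition u0 (m : nat) (u : I -> 'cV[R]_m) : 'cV[R]_m :=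
  if has_interior then m0^-1 *: \sum_(i | ~~ bnd i) mass i *: u i
  else cell_vol^-1 *: \sum_i mass i *: u i.
Definition cell_avg (m : nat) (u : I -> 'cV[R]_m) : 'cV[R]_m :=
  cell_vol^-1 *: \sum_i mass i *: u i.
End Defs.

From Pilot Require Import Defs.
From HB Require Import structures.
From mathcomp Require Import all_boot all_order all_algebra.
From mathcomp Require Import all_classical all_reals.
From mathcomp Require Import topology normedtype measure lebesgue_integral.
From mathcomp Require Import ring.
Import Order.TTheory GRing.Theory Num.Theory.
Local Open Scope ring_scope.
Local Open Scope classical_set_scope.
Set Implicit Arguments. Unset Strict Implicit.

(* The vectors c_i = int_{dK} phi_i n vanish at interior nodes and sum to
   int_{dK} n = 0, so the boundary flux sum_i f(u_i) c_i equals
   sum_{i in bnd} (f(u_i) - f(u_0)) c_i, and by the definition of the bar state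
   each term is w_i (u_i + u_0 - 2 ubar_i) with w_i = |c_i| lam_i.  Splitting
   |K| = m_0/s + sum_{i in bnd} m_i/s, the updated average becomes
     |K|^-1 ((m_0/s - dt W) u_0 + sum_i (m_i/s - dt w_i) u_i + sum_i 2 dt w_i ubar_i)
   with W = sum_i w_i: a convex combination of points of G exactly when the
   time step restriction holds. *)

Section RealIntegrals.
Variables (R : realType) (md : measure_display) (T : measurableType md)
  (mu : {measure set T -> \bar R}) (D : set T).
Hypothesis mD : measurable D.

Lemma integrable_sum_EFin (J : Type) (s : seq J) (f : J -> T -> R) :
  (forall j, mu.-integrable D (EFin \o f j)) ->
  mu.-integrable D (EFin \o (fun x => \sum_(j <- s) f j x)).
Proof.
move=> fi; apply: (eq_integrable mD _ _ _
  (integrable_sum mD s (P := xpredT) (fun j _ => fi j))) => x _.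
by rewrite /= sumEFin.
Qed.

Lemma integrable_EFinZl (r : R) (f : T -> R) :
  mu.-integrable D (EFin \o f) -> mu.-integrable D (EFin \o (fun x => r * f x)).
Proof.
move=> fi; apply: (eq_integrable mD _ _ _ (integrableZl mD r fi)) => x _ /=.
by rewrite EFinM.
Qed.

Lemma Rintegral_sum (J : Type) (s : seq J) (f : J -> T -> R) :
  (forall j, mu.-integrable D (EFin \o f j)) ->
  \int[mu]_(x in D) (\sum_(j <- s) f j x) = \sum_(j <- s) \int[mu]_(x in D) f j x.
Proof.
move=> fi; elim: s => [|j s IH].
  under eq_Rintegral do rewrite big_nil.
  by rewrite big_nil Rintegral_cst // mul0r.
under eq_Rintegral do rewrite big_cons.
by rewrite big_cons RintegralD ?IH //; apply: integrable_sum_EFin.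
Qed.

End RealIntegrals.

Lemma update_regroup (R : comPzRingType) (V : lmodType R) (I : finType) (P : {pred I})
  (u ub : I -> V) (x0 : V) (a dt : R) (b w : I -> R) :
  a *: x0 + \sum_(i | P i) b i *: u i
    - dt *: \sum_(i | P i) w i *: (u i + x0 - 2%:R *: ub i)
  = (a - dt * \sum_(i | P i) w i) *: x0 + \sum_(i | P i) (b i - dt * w i) *: u i
    + \sum_(i | P i) (2%:R * dt * w i) *: ub i.
Proof.
have -> : \sum_(i | P i) (b i - dt * w i) *: u i
    = \sum_(i | P i) b i *: u i - dt *: \sum_(i | P i) w i *: u i.
  by rewrite scaler_sumr -sumrB; apply: eq_bigr => i _; rewrite scalerBl scalerA.
have -> : \sum_(i | P i) (2%:R * dt * w i) *: ub i
    = dt *: \sum_(i | P i) w i *: (2%:R *: ub i).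
  by rewrite scaler_sumr; apply: eq_bigr => i _; rewrite !scalerA; congr (_ *: _); ring.
have -> : \sum_(i | P i) w i *: (u i + x0 - 2%:R *: ub i)
    = \sum_(i | P i) w i *: u i + (\sum_(i | P i) w i) *: x0
      - \sum_(i | P i) w i *: (2%:R *: ub i).
  by rewrite scaler_suml -big_split -sumrB; apply: eq_bigr => i _; rewrite scalerBr scalerDr.
rewrite scalerBl -scalerA !scalerBr !scalerDr opprB opprD !addrA.
by rewrite [RHS]addrAC [LHS]addrAC; congr (_ - _); rewrite -!(addrAC _ (- _)) addrAC.
Qed.

Section ConvexCone.
Variables (R : realType) (k : nat) (G : set 'cV[R]_k).
Hypothesis cG : convex_set G.

(* [v] lies in [a *: G], with the convention [0 *: G = [set 0]]; for convex [G]
   these sets add up: [a *: G + b *: G = (a + b) *: G]. *)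
Definition scaled_mem (a : R) (v : 'cV[R]_k) :=
  (a = 0 /\ v = 0) \/ (0 < a /\ G (a^-1 *: v)).

Lemma scaled_memD a b v w :
  scaled_mem a v -> scaled_mem b w -> scaled_mem (a + b) (v + w).
Proof.
move=> [[-> ->]|[a0 Ga]] [[-> ->]|[b0 Gb]].
- by left; rewrite !addr0.
- by right; rewrite !add0r.
- by right; rewrite !addr0.
right; split; first by rewrite addr_gt0.
have ab0 : a + b != 0 by rewrite gt_eqF // addr_gt0.
have t01 : 0 <= a / (a + b) <= 1.
  apply/andP; split; first by rewrite divr_ge0 // ltW // addr_gt0.
  by rewrite ler_pdivrMr ?addr_gt0 // mul1r lerDl ltW.
suff <- : a / (a + b) *: (a^-1 *: v) + (1 - a / (a + b)) *: (b^-1 *: w)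
        = (a + b)^-1 *: (v + w) by exact: cG.
by rewrite !scalerA scalerDr; congr (_ *: _ + _ *: _); field; rewrite ab0 gt_eqF.
Qed.

Lemma scaled_mem_sum (J : finType) (P : pred J) (a : J -> R) (v : J -> 'cV[R]_k) :
  (forall j, P j -> scaled_mem (a j) (v j)) ->
  scaled_mem (\sum_(j | P j) a j) (\sum_(j | P j) v j).
Proof.
move=> h; apply: (big_rec2 scaled_mem); first by left.
by move=> j y1 y2 Pj; apply: scaled_memD; apply: h.
Qed.

Lemma scaled_memZ a p : 0 <= a -> G p -> scaled_mem a (a *: p).
Proof.
rewrite le_eqVlt => /orP[/eqP <-|a0] Gp; first by left; rewrite scale0r.
by right; split => //; rewrite scalerA mulVf ?gt_eqF // scale1r.
Qed.

Lemma scaled_mem_inv a v : 0 < a -> scaled_mem a v -> G (a^-1 *: v).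
Proof. by move=> a0 [[a_eq0 _]|[_ //]]; rewrite a_eq0 ltxx in a0. Qed.

Lemma convex_set_comb (J : finType) (P : pred J) (a : J -> R) (p : J -> 'cV[R]_k) :
  (forall j, P j -> 0 <= a j) -> (forall j, P j -> G (p j)) ->
  0 < \sum_(j | P j) a j ->
  G ((\sum_(j | P j) a j)^-1 *: \sum_(j | P j) a j *: p j).
Proof.
move=> a0 Gp sa0; apply: scaled_mem_inv => //.
by apply: scaled_mem_sum => j Pj; apply: scaled_memZ; [exact: a0 | exact: Gp].
Qed.

Lemma convex_update (I : finType) (P : {pred I}) (u ub : I -> 'cV[R]_k)
  (x0 : 'cV[R]_k) (a dt V : R) (b w : I -> R) :
  G x0 -> (forall i, P i -> G (u i)) -> (forall i, P i -> G (ub i)) ->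
  0 <= dt -> (forall i, P i -> 0 <= w i) ->
  dt * (\sum_(i | P i) w i) <= a -> (forall i, P i -> dt * w i <= b i) ->
  V = a + \sum_(i | P i) b i -> 0 < V ->
  G (V^-1 *: (a *: x0 + \sum_(i | P i) b i *: u i
       - dt *: \sum_(i | P i) w i *: (u i + x0 - 2%:R *: ub i))).
Proof.
move=> Gx0 Gu Gub dt0 w0 ha hb -> V0; rewrite update_regroup.
apply: scaled_mem_inv => //.
have -> : a + \sum_(i | P i) b i = (a - dt * \sum_(i | P i) w i)
    + \sum_(i | P i) (b i - dt * w i) + \sum_(i | P i) (2%:R * dt * w i).
  rewrite sumrB -!mulr_sumr; ring.
apply: scaled_memD; first apply: scaled_memD.
- by apply: scaled_memZ; rewrite ?subr_ge0.
- apply: scaled_mem_sum => i Pi.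
  by apply: scaled_memZ; [rewrite subr_ge0; exact: hb | exact: Gu].
- apply: scaled_mem_sum => i Pi.
  by apply: scaled_memZ; [rewrite !mulr_ge0 ?w0 | exact: Gub].
Qed.

End ConvexCone.

Lemma vnorm_gt0 (R : realType) (k : nat) (v : 'cV[R]_k) : v != 0 -> 0 < vnorm v.
Proof.
move=> v0; rewrite /vnorm sqrtr_gt0 lt_def sumr_ge0 ?andbT => [|i _]; last exact: sqr_ge0.
apply: contra v0 => /eqP /psumr_eq0P v2_eq0; apply/eqP/matrixP => i l.
rewrite (ord1 l) mxE; apply/eqP; rewrite -sqrf_eq0; apply/eqP.
by apply: v2_eq0 => // j _; exact: sqr_ge0.
Qed.

Definition bar_state (R : realType) (m dim : nat) (F : 'cV[R]_m -> 'M[R]_(m, dim))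
    (x0 ui : 'cV[R]_m) (lam : R) (n : 'cV[R]_dim) : 'cV[R]_m :=
  (2%:R)^-1 *: (ui + x0) - (2 * lam)^-1 *: ((F ui - F x0) *m n).

Lemma flux_bar_state (R : realType) (m dim : nat) (F : 'cV[R]_m -> 'M[R]_(m, dim))
    (x0 ui : 'cV[R]_m) (lam : R) (c : 'cV[R]_dim) :
  c != 0 -> 0 < lam ->
  (F ui - F x0) *m c = (vnorm c * lam) *:
    (ui + x0 - 2%:R *: bar_state F x0 ui lam ((vnorm c)^-1 *: c)).
Proof.
move=> c0 lam0; have nc0 := vnorm_gt0 c0.
rewrite /bar_state -scalemxAr; apply/matrixP => k l; rewrite !mxE.
by field; rewrite !gt_eqF.
Qed.

Section Cell.
Variables (R : realType) (md : measure_display) (T : measurableType md)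
  (dim : nat) (mu sigma : {measure set T -> \bar R}) (K bK : set T)
  (nrm : T -> 'cV[R]_dim) (I : finType) (phi : I -> T -> R) (bnd : {pred I}).
Hypotheses (mK : measurable K) (mbK : measurable bK) (bKK : bK `<=` K)
  (phi1 : forall x, K x -> \sum_j phi j x = 1)
  (phi0 : forall i x, ~~ bnd i -> bK x -> phi i x = 0)
  (iphi : forall j, mu.-integrable K (fun x => (phi j x)%:E))
  (iphin : forall j k, sigma.-integrable bK (fun x => (phi j x * nrm x k 0)%:E))
  (mass_gt0 : forall i, 0 < mass mu K phi i).

Local Notation c := (cvec sigma bK phi nrm).
Local Notation mass := (mass mu K phi).
Local Notation V := (cell_vol mu K).
Local Notation s := (s_par R bnd).
Local Notation m0 := (m0 mu K phi bnd).

Lemma cvecE i l : c i l 0 = \int[sigma]_(x in bK) (phi i x * nrm x l 0).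
Proof. by rewrite /cvec /vint mxE; apply: eq_Rintegral => x _; rewrite mxE. Qed.

Lemma sum_mass : \sum_i mass i = V.
Proof.
rewrite /Defs.mass -Rintegral_sum //.
rewrite (eq_Rintegral _ (g := fun=> 1)) => [|x /set_mem xK]; last by rewrite phi1.
by rewrite Rintegral_cst // mul1r.
Qed.

Lemma cvec_interior i : ~~ bnd i -> c i = 0.
Proof.
move=> bi; apply/matrixP => l l'; rewrite (ord1 l') cvecE mxE.
rewrite (eq_Rintegral _ (g := fun=> 0)) => [|x /set_mem xb]; last by rewrite phi0 ?mul0r.
by rewrite Rintegral_cst // mul0r.
Qed.

Lemma sum_cvec : vint sigma bK nrm = 0 -> \sum_i c i = 0.
Proof.
move=> /matrixP nrm0; apply/matrixP => l l'; rewrite (ord1 l') summxE.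
under eq_bigr do rewrite cvecE.
rewrite -Rintegral_sum // => [|j]; last exact: iphin.
rewrite (eq_Rintegral _ (g := fun x => nrm x l 0)) => [|x /set_mem xb].
  by have := nrm0 l 0; rewrite !mxE.
by rewrite -mulr_suml phi1 ?mul1r //; exact: bKK.
Qed.

Lemma vint_flux (m : nat) (Fu : I -> 'M[R]_(m, dim)) :
  vint sigma bK (fun x => (\sum_j phi j x *: Fu j) *m nrm x) = \sum_j Fu j *m c j.
Proof.
have iphinZ j l r : sigma.-integrable bK (EFin \o fun x => r * (phi j x * nrm x l 0)).
  exact/integrable_EFinZl/iphin.
apply/matrixP => k l; rewrite (ord1 l) /vint mxE summxE.
rewrite (@eq_Rintegral _ _ _ _ _
   (fun x => \sum_j \sum_l Fu j k l * (phi j x * nrm x l 0))); last first.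
  move=> x _; rewrite mxE.
  under eq_bigr do rewrite summxE big_distrl /=.
  rewrite exchange_big /=; apply: eq_bigr => j _; apply: eq_bigr => l' _.
  by rewrite mxE; ring.
rewrite Rintegral_sum // => [|j]; last exact: integrable_sum_EFin.
apply: eq_bigr => j _; rewrite mxE Rintegral_sum //.
by apply: eq_bigr => l' _; rewrite RintegralZl ?cvecE //; exact: iphin.
Qed.

Lemma boundary_flux (m : nat) (F : 'cV[R]_m -> 'M[R]_(m, dim)) (u : I -> 'cV[R]_m)
    (x0 : 'cV[R]_m) (lam : I -> R) :
  vint sigma bK nrm = 0 ->
  (forall i, bnd i -> c i != 0) -> (forall i, bnd i -> 0 < lam i) ->
  vint sigma bK (fun x => (\sum_j phi j x *: F (u j)) *m nrm x)
  = \sum_(i | bnd i) (vnorm (c i) * lam i) *: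
      (u i + x0 - 2%:R *: bar_state F x0 (u i) (lam i) ((vnorm (c i))^-1 *: c i)).
Proof.
move=> nrm0 c0 lam0; rewrite vint_flux.
have -> : \sum_j F (u j) *m c j = \sum_j (F (u j) - F x0) *m c j.
  by rewrite (eq_bigr _ (fun j _ => mulmxBl _ _ _)) sumrB -mulmx_sumr sum_cvec ?mulmx0 ?subr0.
rewrite (bigID bnd) /= [X in _ + X]big1 ?addr0 => [|i bi]; last by rewrite cvec_interior ?mulmx0.
by apply: eq_bigr => i bi; rewrite (flux_bar_state F x0 (u i) (c0 i bi) (lam0 i bi)).
Qed.

Lemma sum_mass_gt0 (P : pred I) (i0 : I) : P i0 -> 0 < \sum_(i | P i) mass i.
Proof.
move=> Pi0; rewrite (bigD1 i0) //= ltr_pwDl ?mass_gt0 // sumr_ge0 // => j _.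
exact: ltW.
Qed.

Lemma cell_vol_gt0 (i0 : I) : 0 < V.
Proof. by rewrite -sum_mass; apply: (sum_mass_gt0 (i0 := i0)). Qed.

Lemma u0_mem (m : nat) (G : set 'cV[R]_m) (u : I -> 'cV[R]_m) (i0 : I) :
  convex_set G -> (forall j, G (u j)) -> G (u0 mu K phi bnd u).
Proof.
move=> cG Gu; rewrite /u0 /Defs.m0 /has_interior; case: existsP => [[j0 bj0] | _].
  by apply: (convex_set_comb cG) => // [j _|]; [exact: ltW | exact: sum_mass_gt0 bj0].
rewrite -sum_mass.
by apply: (convex_set_comb cG) => // [j _|]; [exact: ltW | exact: (sum_mass_gt0 (i0 := i0))].
Qed.

Lemma cell_vol_split : V = s^-1 * m0 + \sum_(i | bnd i) s^-1 * mass i.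
Proof.
rewrite /s_par /Defs.m0 /has_interior -mulr_sumr -sum_mass.
case: existsP => [_ | nb].
  by rewrite invr1 !mul1r [LHS](bigID bnd) addrC.
have allb : bnd =1 xpredT by move=> i; apply/negPn/negP => nbi; apply: nb; exists i.
by rewrite (eq_bigl _ _ allb); field.
Qed.

Lemma mass_moment_split (m : nat) (u : I -> 'cV[R]_m) (i0 : I) :
  \sum_i mass i *: u i
  = (s^-1 * m0) *: u0 mu K phi bnd u + \sum_(i | bnd i) (s^-1 * mass i) *: u i.
Proof.
rewrite /u0 /s_par /Defs.m0 /has_interior.
case: existsP => [[j0 bj0] | nb].
  rewrite invr1 mul1r scalerA mulfV ?gt_eqF ?(sum_mass_gt0 bj0) // scale1r.
  under [X in _ + X]eq_bigr do rewrite mul1r.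
  by rewrite [LHS](bigID bnd) addrC.
have allb : bnd =1 xpredT by move=> i; apply/negPn/negP => nbi; apply: nb; exists i.
rewrite (eq_bigl _ _ allb) -sum_mass scalerA mulrAC -mulrA.
under [X in _ + X]eq_bigr do rewrite -scalerA.
have V_neq0 : \sum_i mass i != 0 by rewrite sum_mass gt_eqF ?(cell_vol_gt0 i0).
rewrite -scaler_sumr mulVf // mulr1 -scalerDl.
have -> : 2^-1 + 2^-1 = 1 :> R by field.
by rewrite scale1r.
Qed.

End Cell.

Theorem lemma1
  (R : realType) (md : measure_display) (T : measurableType md)
  (dim m : nat)
  (mu sigma : {measure set T -> \bar R})      (* volume and surface measures *)
  (K bK : set T)                              (* the cell K_e and its boundary *)
  (nrm : T -> 'cV[R]_dim)                     (* unit outward normal on bK *)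
  (I : finType)                               (* local index set N_e *)
  (xn : I -> T)                               (* nodes x_i *)
  (bnd : {pred I})                            (* N_e^boundary *)
  (phi : I -> T -> R)                         (* basis functions on K_e *)
  (F : 'cV[R]_m -> 'M[R]_(m, dim))            (* flux f *)
  (G : set 'cV[R]_m) (u : I -> 'cV[R]_m) (lam : I -> R) (dt : R) :
  (* cell geometry *)
  measurable K -> measurable bK -> bK `<=` K -> (mu K < +oo)%E ->
  (forall x, bK x -> vnorm (nrm x) = 1) ->
  (forall k, sigma.-integrable bK (fun x => (nrm x k 0)%:E)) ->
  vint sigma bK nrm = 0 ->                     (* int_{dK} n ds = 0 *)
  (* basis functions *)
  (forall i, bnd i <-> bK (xn i)) ->
  (forall j x, K x -> 0 <= phi j x) ->
  (forall x, K x -> \sum_j phi j x = 1) ->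
  (forall i x, ~~ bnd i -> bK x -> phi i x = 0) ->
  (forall j, mu.-integrable K (fun x => (phi j x)%:E)) ->
  (forall j k, sigma.-integrable bK (fun x => (phi j x * nrm x k 0)%:E)) ->
  (forall i, 0 < mass mu K phi i) ->
  (forall i, bnd i -> cvec sigma bK phi nrm i != 0) ->
  (* admissible set and states *)
  convex_set G ->
  (forall j, G (u j)) ->
  (forall i, bnd i -> 0 < lam i) ->
  (forall i, bnd i ->
     let ni := (vnorm (cvec sigma bK phi nrm i))^-1 *: cvec sigma bK phi nrm i in
     G ((2%:R)^-1 *: (u i + u0 mu K phi bnd u)
        - (2 * lam i)^-1 *: ((F (u i) - F (u0 mu K phi bnd u)) *m ni))) ->
  (* time step restriction *)
  0 < dt ->
  (forall i, bnd i ->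
     dt <= (s_par R bnd)^-1 *
           (mass mu K phi i / (vnorm (cvec sigma bK phi nrm i) * lam i))) ->
  dt <= (s_par R bnd)^-1 *
        (m0 mu K phi bnd /
         \sum_(i | bnd i) vnorm (cvec sigma bK phi nrm i) * lam i) ->
  G (cell_avg mu K phi u
     - (dt / cell_vol mu K) *:
         vint sigma bK (fun x => (\sum_j phi j x *: F (u j)) *m nrm x)).
Proof.
move=> mK mbK bKK _ _ _ nrm0 _ _ phi1 phi0 iphi iphin mass_gt0 c0
  cG Gu lam0 Gbar dt0 dt_le_i dt_le_0.
set c := cvec sigma bK phi nrm.
have w_gt0 i : bnd i -> 0 < vnorm (c i) * lam i.
  by move=> bi; rewrite mulr_gt0 ?lam0 ?vnorm_gt0 ?c0.
have W_gt0 : 0 < \sum_(i | bnd i) vnorm (c i) * lam i.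
  rewrite lt_def sumr_ge0 ?andbT => [|i bi]; last exact/ltW/w_gt0.
  by apply: contraTneq dt_le_0 => ->; rewrite invr0 !mulr0 -ltNge.
have [i0 _] : exists i0, bnd i0.
  apply/existsP; apply: contraTT W_gt0 => /existsPn nb.
  by rewrite big_pred0 ?ltxx // => i; exact: negbTE.
rewrite /cell_avg (boundary_flux mbK bKK phi1 phi0 iphin F u (u0 mu K phi bnd u) nrm0 c0 lam0).
rewrite [dt / _]mulrC -scalerA -scalerBr (mass_moment_split bnd mK phi1 iphi mass_gt0 u i0).
apply: (convex_update cG); first exact: (u0_mem bnd mK phi1 iphi mass_gt0 i0).
- by move=> i _; exact: Gu.
- exact: Gbar.
- exact: ltW.
- by move=> i bi; exact/ltW/w_gt0.
- by rewrite mulrA ler_pdivlMr in dt_le_0.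
- by move=> i bi; have := dt_le_i i bi; rewrite [_ * (_ / _)]mulrA ler_pdivlMr ?w_gt0.
- exact: (cell_vol_split bnd mK phi1 iphi).
- exact: (cell_vol_gt0 mK phi1 iphi mass_gt0 i0).
Qed.
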